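(* Let $(x,y)\mapsto x\cdot y$ be the symmetric bilinear form associated to a positive definite quadratic form on $\mathbb{R}^2$. Let $b_1,b_2\in\mathbb{R}^2$ be linearly independent and $v_1,v_2\in\mathbb{R}^2$ distinct. If $b_1\cdot b_2\ne 0$, $v_1\cdot v_1=v_2\cdot v_2$, and $|v_1\cdot b_j|=|v_2\cdot b_j|$ for $j=1,2$, then $v_1=-v_2$. *)

From HB Require Import structures.
From mathcomp Require Import all_boot all_order all_algebra.
Set Implicit Arguments. Unset Strict Implicit. Unset Printing Implicit Defensive.
Import Order.TTheory GRing.Theory Num.Theory.
Local Open Scope ring_scope.

Definition bform (R : realFieldType) (M : 'M[R]_2) (x y : 'rV[R]_2) : R :=
  (x *m M *m y^T) 0 0.

Definition pos_def_sym (R : realFieldType) (M : 'M[R]_2) : Prop :=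
  M^T = M /\ forall x : 'rV[R]_2, x != 0 -> 0 < bform M x x.

From HB Require Import structures.
From mathcomp Require Import all_boot all_order all_algebra.
From mathcomp Require Import reals.
Set Implicit Arguments. Unset Strict Implicit. Unset Printing Implicit Defensive.
Import Order.TTheory GRing.Theory Num.Theory.
Local Open Scope ring_scope.

(* Put d := v1 - v2 and s := v1 + v2.  By symmetry d.s = v1.v1 - v2.v2 = 0,
   and |v1.b| = |v2.b| means that d.b = 0 or s.b = 0.  If d is orthogonal to
   both b1 and b2 it vanishes by nondegeneracy, contradicting v1 <> v2; if s
   is, then s = 0.  In a mixed case d.bi = 0 = s.bj with {i, j} = {1, 2}, both
   bi and s lie on the line orthogonal to d <> 0, so s is a multiple of bi;
   since s.bj = 0 while bi.bj <> 0, again s = 0. *)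

Lemma mx11_eq0 (F : nmodType) (A : 'M[F]_1) : (A == 0) = (A 0 0 == 0).
Proof.
apply/eqP/eqP => [->|A00]; first by rewrite mxE.
by apply/matrixP => i j; rewrite !ord1 A00 mxE.
Qed.

Lemma row_free_col_mx_separated (F : fieldType) n (p s : 'rV[F]_n) (c : 'cV_n) :
  s != 0 -> s *m c = 0 -> p *m c != 0 -> row_free (col_mx p s).
Proof.
move=> s0 sc0 pc0; apply: inj_row_free => v.
rewrite -[v]hsubmxK mul_row_col => vps0.
have a0 : lsubmx v = 0.
  have := congr1 (mulmx^~ c) vps0.
  rewrite mulmxDl -!mulmxA sc0 mulmx0 addr0 mul0mx [p *m c]mx11_scalar mul_mx_scalar.
  by move/eqP; rewrite scalemx_eq0 -mx11_eq0 (negbTE pc0) /= => /eqP.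
have b0 : rsubmx v = 0.
  move: vps0; rewrite a0 mul0mx add0r [X in X *m s]mx11_scalar mul_scalar_mx.
  by move/eqP; rewrite scalemx_eq0 (negbTE s0) orbF -mx11_eq0 => /eqP.
by rewrite a0 b0 row_mx0.
Qed.

Section BilinearForm.
Variables (R : realFieldType) (M : 'M[R]_2).
Implicit Types x y z p q d s : 'rV[R]_2.

Lemma bform_eq0 x y : (bform M x y == 0) = (x *m (M *m y^T) == 0).
Proof. by rewrite mulmxA mx11_eq0. Qed.

Lemma bformDl x y z : bform M (x + y) z = bform M x z + bform M y z.
Proof. by rewrite /bform !mulmxDl mxE. Qed.

Lemma bformBl x y z : bform M (x - y) z = bform M x z - bform M y z.
Proof. by rewrite /bform !mulmxBl !mxE. Qed.

Lemma bformDr x y z : bform M x (y + z) = bform M x y + bform M x z.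
Proof. by rewrite /bform linearD mulmxDr mxE. Qed.

Lemma bform_sym x y : M^T = M -> bform M x y = bform M y x.
Proof.
by move=> Msym; rewrite /bform -[x *m M *m y^T]trmxK [LHS]mxE !trmx_mul !trmxK Msym mulmxA.
Qed.

Lemma bform_subl_addr x y :
  M^T = M -> bform M (x - y) (x + y) = bform M x x - bform M y y.
Proof.
move=> Msym; rewrite bformBl !bformDr (bform_sym y x Msym).
by rewrite opprD addrA addrK.
Qed.

Lemma eq_norm_bform x y z : `|bform M x z| = `|bform M y z| ->
  bform M (x - y) z = 0 \/ bform M (x + y) z = 0.
Proof.
move/eqP; rewrite eqr_norm2 => /orP[]/eqP xyz.
  by left; rewrite bformBl xyz subrr.
by right; rewrite bformDl xyz addNr.
Qed.

Lemma pos_def_sym_unitmx : pos_def_sym M -> M \in unitmx.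
Proof.
move=> [_ Mpos]; rewrite -row_free_unit; apply: inj_row_free => x xM0.
apply/eqP; apply: contraT => x0.
by have := Mpos x x0; rewrite /bform xM0 mul0mx mxE ltxx.
Qed.

Hypothesis Munit : M \in unitmx.

Lemma bform_basis_eq0 x p q : row_free (col_mx p q) ->
  bform M x p = 0 -> bform M x q = 0 -> x = 0.
Proof.
move=> pq_free /eqP; rewrite bform_eq0 mulmxA => /eqP xp.
move=> /eqP; rewrite bform_eq0 mulmxA => /eqP xq.
have pqT_free : row_free (col_mx p q)^T.
  by rewrite row_free_unit unitmx_tr -row_free_unit.
have M_free : row_free M by rewrite row_free_unit.
apply: (row_free_inj M_free); apply: (row_free_inj pqT_free).
by rewrite tr_col_mx mul_mx_row xp xq row_mx0 !mul0mx.
Qed.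

(* In the plane the vectors orthogonal to d <> 0 form a line, so p and s are
   dependent. *)
Lemma perp_line_eq0 d p q s : d != 0 ->
  bform M d p = 0 -> bform M d s = 0 -> bform M s q = 0 -> bform M p q != 0 ->
  s = 0.
Proof.
move=> d0 dp ds /eqP sq pq; apply/eqP; apply: contraT => s0.
rewrite bform_eq0 in sq; rewrite bform_eq0 in pq.
have ps_free := row_free_col_mx_separated s0 (eqP sq) pq.
by rewrite (bform_basis_eq0 ps_free dp ds) eqxx in d0.
Qed.

End BilinearForm.

Theorem lemma4p8 (R : realType) (M : 'M[R]_2) (b1 b2 v1 v2 : 'rV[R]_2) :
  pos_def_sym M ->
  row_free (col_mx b1 b2) ->
  v1 != v2 ->
  bform M b1 b2 != 0 ->
  bform M v1 v1 = bform M v2 v2 ->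
  `|bform M v1 b1| = `|bform M v2 b1| ->
  `|bform M v1 b2| = `|bform M v2 b2| ->
  v1 = - v2.
Proof.
move=> Mpd b_free v12 b12 vv vb1 vb2; have [Msym _] := Mpd.
have Mu := pos_def_sym_unitmx Mpd.
have d0 : v1 - v2 != 0 by rewrite subr_eq0.
have ds : bform M (v1 - v2) (v1 + v2) = 0 by rewrite bform_subl_addr // vv subrr.
apply/eqP; rewrite -addr_eq0; apply/eqP.
have [d1|s1] := eq_norm_bform vb1; have [d2|s2] := eq_norm_bform vb2.
- by rewrite (bform_basis_eq0 Mu b_free d1 d2) eqxx in d0.
- exact: (perp_line_eq0 Mu d0 d1 ds s2 b12).
- by apply: (perp_line_eq0 Mu d0 d2 ds s1); rewrite bform_sym.
- exact: (bform_basis_eq0 Mu b_free s1 s2).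
Qed.
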